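(* Let $n\ge 2$ be an integer that is a multiple of $3$. If the Aztec diamond $\operatorname{AD}(n-1)$ has a cover by L-trominoes, then $\operatorname{AD}(n+3)$ has a cover by L-trominoes.
   Context: A cell is a unit square $[i,i+1]\times[j,j+1]$ with $i,j\in\mathbb{Z}$. An L-tromino is a set of three cells equal to a $2\times 2$ block of cells with one cell removed. A cover of a region $R$ (a finite edge-connected set of cells) is a set of pairwise disjoint L-trominoes contained in $R$ whose union is $R$. The Aztec diamond $\operatorname{AD}(n)$ is the union of the cells $[a,a+1]\times[b,b+1]$, $a,b\in\mathbb{Z}$, lying completely inside $\{(x,y): |x|+|y|\le n+1\}$. *)

From Stdlib Require Import ZArith Reals List.
Import ListNotations.

(* The cell [a,a+1] x [b,b+1] is represented by its lower-left corner (a,b). *)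
Definition cell : Type := (Z * Z)%type.

Definition region : Type := cell -> Prop.

Definition block (i j : Z) (c : cell) : Prop :=
  (i <= fst c <= i + 1)%Z /\ (j <= snd c <= j + 1)%Z.

(* An L-tromino is given by a 2x2 block (i,j) and the removed cell r of that block. *)
Definition tromino : Type := (Z * Z * cell)%type.

Definition valid_tromino (t : tromino) : Prop :=
  let '(i, j, r) := t in block i j r.

Definition tcells (t : tromino) (c : cell) : Prop :=
  let '(i, j, r) := t in block i j c /\ c <> r.

(* A cover of R: a (finite) family of pairwise disjoint L-trominoes contained in R
   whose union is R.  Distinct positions in the list must be disjoint, so the
   list represents a set of trominoes. *)
Definition is_cover (R : region) (T : list tromino) : Prop :=
  (forall t, In t T -> valid_tromino t) /\
  (forall t, In t T -> forall c, tcells t c -> R c) /\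
  (forall c, R c -> exists t, In t T /\ tcells t c) /\
  (forall (k l : nat) (t1 t2 : tromino),
      nth_error T k = Some t1 -> nth_error T l = Some t2 -> k <> l ->
      forall c, ~ (tcells t1 c /\ tcells t2 c)).

Definition has_cover (R : region) : Prop := exists T, is_cover R T.

Definition AD (n : Z) (c : cell) : Prop :=
  forall x y : R, (
    IZR (fst c) <= x <= IZR (fst c) + 1 ->
    IZR (snd c) <= y <= IZR (snd c) + 1 ->
    Rabs x + Rabs y <= IZR n + 1)%R.

From Stdlib Require Import ZArith Reals List Lia Lra.
Import ListNotations.

(* Outside AD(n-1), the diamond AD(n+3) consists of four mirror images of the
   quarter band {x, y >= 0, n-1 <= x+y <= n+2} of lattice cells.  The band for
   n = 3 is tiled by six trominoes, and the band for n+3 is the band for n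
   shifted right by 3 together with a fixed 12-cell staircase piece on the
   left, tiled by four trominoes; so every band with 3 | n is tiled. *)

Open Scope Z_scope.

(* [reach a] is the largest value of |x| for x in [a, a+1]. *)
Definition reach (a : Z) : Z := Z.max (a + 1) (- a).

Lemma Rabs_le_reach (a : Z) (x : R) :
  (IZR a <= x <= IZR a + 1)%R -> (Rabs x <= IZR (reach a))%R.
Proof.
  intros [Hlo Hhi]; apply Rabs_le.
  assert (Hup : (IZR (a + 1) <= IZR (reach a))%R) by (apply IZR_le; unfold reach; lia).
  assert (Hdown : (IZR (- reach a) <= IZR a)%R) by (apply IZR_le; unfold reach; lia).
  rewrite plus_IZR in Hup; rewrite opp_IZR in Hdown; lra.
Qed.

Lemma exists_Rabs_eq_reach (a : Z) :
  exists x : Z, (IZR a <= IZR x <= IZR a + 1)%R /\ Z.abs x = reach a.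
Proof.
  destruct (Z_le_dec 0 a).
  - exists (a + 1); rewrite plus_IZR; split; [lra | unfold reach; lia].
  - exists a; split; [lra | unfold reach; lia].
Qed.

Lemma AD_iff (m a b : Z) : AD m (a, b) <-> reach a + reach b <= m + 1.
Proof.
  unfold AD; simpl; split.
  - intros HAD.
    destruct (exists_Rabs_eq_reach a) as [x [Hx Ex]].
    destruct (exists_Rabs_eq_reach b) as [y [Hy Ey]].
    specialize (HAD _ _ Hx Hy).
    rewrite !Rabs_Zabs, <- !plus_IZR in HAD; apply le_IZR in HAD; lia.
  - intros Hm x y Hx Hy.
    pose proof (Rabs_le_reach a x Hx); pose proof (Rabs_le_reach b y Hy).
    assert (Hsum : (IZR (reach a + reach b) <= IZR (m + 1))%R) by (apply IZR_le; lia).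
    rewrite !plus_IZR in Hsum; lra.
Qed.

Lemma tcells_iff i j r1 r2 x y :
  tcells (i, j, (r1, r2)) (x, y) <->
  (i <= x <= i + 1 /\ j <= y <= j + 1) /\ (x <> r1 \/ y <> r2).
Proof.
  unfold tcells, block; simpl; split.
  - intros [Hb Hr]; split; [exact Hb|].
    destruct (Z.eq_dec x r1), (Z.eq_dec y r2); subst; tauto.
  - intros [Hb Hr]; split; [exact Hb|]. intros E; inversion E; lia.
Qed.

Lemma cover_nil (R : region) : (forall c, ~ R c) -> is_cover R [].
Proof.
  intros HR; repeat split.
  - intros t [].
  - intros t [].
  - intros c Hc; destruct (HR c Hc).
  - intros k l t1 t2 H1; rewrite nth_error_nil in H1; discriminate.
Qed.

Lemma cover_single t : valid_tromino t -> is_cover (tcells t) [t].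
Proof.
  intros Ht; repeat split.
  - intros u [<-|[]]; exact Ht.
  - intros u [<-|[]] c Hc; exact Hc.
  - intros c Hc; exists t; split; [left|]; auto.
  - intros [|k] [|l] t1 t2 H1 H2 Hkl; try lia;
      [destruct l | destruct k | destruct k]; discriminate.
Qed.

Lemma cover_union (R R1 R2 : region) T1 T2 :
  (forall c, R c <-> R1 c \/ R2 c) -> (forall c, R1 c -> R2 c -> False) ->
  is_cover R1 T1 -> is_cover R2 T2 -> is_cover R (T1 ++ T2).
Proof.
  intros E Dj [V1 [C1 [Cv1 D1]]] [V2 [C2 [Cv2 D2]]]; repeat split.
  - intros t Ht; apply in_app_or in Ht as [Ht|Ht]; auto.
  - intros t Ht c Hc; apply E; apply in_app_or in Ht as [Ht|Ht];
      [left; eapply C1 | right; eapply C2]; eauto.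
  - intros c Hc; apply E in Hc as [Hc|Hc];
      [destruct (Cv1 c Hc) as [t [Ht Htc]] | destruct (Cv2 c Hc) as [t [Ht Htc]]];
      exists t; split; auto; apply in_or_app; auto.
  - intros k l t1 t2 H1 H2 Hkl c [Hc1 Hc2].
    assert (Dj12 : forall k1 k2 u1 u2, nth_error T1 k1 = Some u1 ->
              nth_error T2 k2 = Some u2 -> tcells u1 c -> tcells u2 c -> False).
    { intros k1 k2 u1 u2 E1 E2 Hu1 Hu2; apply (Dj c);
        [apply (C1 u1) | apply (C2 u2)]; auto; eapply nth_error_In; eauto. }
    destruct (Nat.lt_ge_cases k (length T1)) as [Hk|Hk];
    destruct (Nat.lt_ge_cases l (length T1)) as [Hl|Hl];
      [rewrite nth_error_app1 in H1, H2 by auto | rewrite nth_error_app1 in H1 by auto;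
       rewrite nth_error_app2 in H2 by auto | rewrite nth_error_app2 in H1 by auto;
       rewrite nth_error_app1 in H2 by auto | rewrite nth_error_app2 in H1, H2 by auto].
    + exact (D1 k l t1 t2 H1 H2 Hkl c (conj Hc1 Hc2)).
    + eauto.
    + eauto.
    + apply (D2 _ _ t1 t2 H1 H2 ltac:(lia) c); auto.
Qed.

Lemma cover_cons (R : region) t T :
  valid_tromino t -> (forall c, tcells t c -> R c) ->
  is_cover (fun c => R c /\ ~ tcells t c) T -> is_cover R (t :: T).
Proof.
  intros Ht Hsub HT.
  apply (cover_union R (tcells t) (fun c => R c /\ ~ tcells t c) [t] T); auto.
  - intros c; split; [|intros [Hc|[Hc _]]; auto].
    intros Hc; destruct t as [[i j] [r1 r2]], c as [x y].
    assert (Hdec : tcells (i, j, (r1, r2)) (x, y) \/ ~ tcells (i, j, (r1, r2)) (x, y))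
      by (rewrite tcells_iff; lia).
    tauto.
  - intros c Hc [_ Hn]; contradiction.
  - exact (cover_single t Ht).
Qed.

Lemma cover_preimage (h : cell -> cell) (g : tromino -> tromino) (R : region) T :
  (forall t, valid_tromino t -> valid_tromino (g t)) ->
  (forall t, valid_tromino t -> forall c, tcells (g t) c <-> tcells t (h c)) ->
  is_cover R T -> is_cover (fun c => R (h c)) (map g T).
Proof.
  intros Hv Hc [V [C [Cv D]]]; repeat split.
  - intros t Ht; apply in_map_iff in Ht as [u [<- Hu]]; auto.
  - intros t Ht c Htc; apply in_map_iff in Ht as [u [<- Hu]].
    eapply C; eauto; apply Hc; auto.
  - intros c Hrc; destruct (Cv _ Hrc) as [t [Ht Htc]].
    exists (g t); split; [apply in_map | apply Hc]; auto.
  - intros k l t1 t2 H1 H2 Hkl c [Hc1 Hc2].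
    rewrite nth_error_map in H1, H2.
    destruct (nth_error T k) as [u1|] eqn:E1; [|discriminate].
    destruct (nth_error T l) as [u2|] eqn:E2; [|discriminate].
    injection H1 as <-; injection H2 as <-.
    apply (D k l u1 u2 E1 E2 Hkl (h c)); split; apply Hc; auto;
      apply V; eapply nth_error_In; eauto.
Qed.

Lemma has_cover_union (R R1 R2 : region) :
  (forall c, R c <-> R1 c \/ R2 c) -> (forall c, R1 c -> R2 c -> False) ->
  has_cover R1 -> has_cover R2 -> has_cover R.
Proof.
  intros E Dj [T1 H1] [T2 H2]; exists (T1 ++ T2); exact (cover_union R R1 R2 T1 T2 E Dj H1 H2).
Qed.

Definition shift_tromino (dx dy : Z) (t : tromino) : tromino :=
  let '(i, j, (r1, r2)) := t in (i + dx, j + dy, (r1 + dx, r2 + dy)).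
Definition mirror_x_tromino (t : tromino) : tromino :=
  let '(i, j, (r1, r2)) := t in (-2 - i, j, (-1 - r1, r2)).
Definition mirror_y_tromino (t : tromino) : tromino :=
  let '(i, j, (r1, r2)) := t in (i, -2 - j, (r1, -1 - r2)).

Definition mirror_x (c : cell) : cell := (-1 - fst c, snd c).
Definition mirror_y (c : cell) : cell := (fst c, -1 - snd c).

Ltac solve_tromino_image :=
  intros [[i j] [r1 r2]];
  cbv beta iota delta [valid_tromino block shift_tromino mirror_x_tromino mirror_y_tromino
                       fst snd];
  first [ intros; lia
        | intros _ [x y]; cbv beta iota delta [mirror_x mirror_y fst snd];
          rewrite !tcells_iff; lia ].

Lemma has_cover_shift dx dy (R : region) :
  has_cover R -> has_cover (fun c => R (fst c - dx, snd c - dy)).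
Proof.
  intros [T HT]; exists (map (shift_tromino dx dy) T).
  apply (cover_preimage (fun c => (fst c - dx, snd c - dy))); [solve_tromino_image..|exact HT].
Qed.

Lemma has_cover_mirror_x (R : region) : has_cover R -> has_cover (fun c => R (mirror_x c)).
Proof.
  intros [T HT]; exists (map mirror_x_tromino T).
  apply cover_preimage; [solve_tromino_image..|exact HT].
Qed.

Lemma has_cover_mirror_y (R : region) : has_cover R -> has_cover (fun c => R (mirror_y c)).
Proof.
  intros [T HT]; exists (map mirror_y_tromino T).
  apply cover_preimage; [solve_tromino_image..|exact HT].
Qed.

Lemma has_cover_quadrant_mirrors (R : region) :
  (forall x y, R (x, y) -> 0 <= x /\ 0 <= y) -> has_cover R ->
  has_cover (fun c => R c \/ R (mirror_x c) \/ R (mirror_y c) \/ R (mirror_y (mirror_x c))).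
Proof.
  intros Hq HR.
  apply (has_cover_union _ R
           (fun c => R (mirror_x c) \/ R (mirror_y c) \/ R (mirror_y (mirror_x c))));
    [tauto | | exact HR |].
  { intros [x y] H0 [H|[H|H]]; apply Hq in H0, H; cbn [mirror_x mirror_y fst snd] in *; lia. }
  apply (has_cover_union _ (fun c => R (mirror_x c))
           (fun c => R (mirror_y c) \/ R (mirror_y (mirror_x c))));
    [tauto | | now apply has_cover_mirror_x |].
  { intros [x y] H0 [H|H]; apply Hq in H0, H; cbn [mirror_x mirror_y fst snd] in *; lia. }
  apply (has_cover_union _ (fun c => R (mirror_y c)) (fun c => R (mirror_y (mirror_x c))));
    [tauto | | now apply has_cover_mirror_y |].
  - intros [x y] H0 H; apply Hq in H0, H; cbn [mirror_x mirror_y fst snd] in *; lia.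
  - apply (has_cover_mirror_x (fun c => R (mirror_y c))), has_cover_mirror_y, HR.
Qed.

Definition band (n : Z) : region :=
  fun c => 0 <= fst c /\ 0 <= snd c /\ n - 1 <= fst c + snd c <= n + 2.

Definition staircase : region :=
  fun c => 0 <= fst c <= 2 /\ 0 <= fst c + snd c <= 3.

Ltac explicit_cover R :=
  repeat (apply cover_cons;
    [ unfold valid_tromino, block; simpl; lia
    | intros [x y]; cbn beta; rewrite ?tcells_iff; unfold R; simpl; lia
    | ]);
  apply cover_nil; intros [x y]; cbn beta; rewrite ?tcells_iff; unfold R; simpl; lia.

Lemma has_cover_band3 : has_cover (band 3).
Proof.
  exists [(0, 2, (1, 2)); (0, 4, (1, 5)); (1, 1, (2, 2));
          (2, 0, (2, 1)); (2, 2, (3, 3)); (4, 0, (5, 1))].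
  explicit_cover band.
Qed.

Lemma has_cover_staircase : has_cover staircase.
Proof.
  exists [(0, 0, (1, 0)); (0, 2, (1, 3)); (1, -2, (1, -2)); (1, 0, (1, 1))].
  explicit_cover staircase.
Qed.

Lemma has_cover_band_add3 (n : Z) : 0 <= n -> has_cover (band n) -> has_cover (band (n + 3)).
Proof.
  intros Hn HB.
  apply (has_cover_union _ (fun c => band n (fst c - 3, snd c - 0))
           (fun c => staircase (fst c - 0, snd c - (n + 2)))).
  - intros [x y]; unfold band, staircase; simpl; lia.
  - intros [x y]; unfold band, staircase; simpl; lia.
  - exact (has_cover_shift 3 0 _ HB).
  - exact (has_cover_shift 0 (n + 2) _ has_cover_staircase).
Qed.

Lemma has_cover_band (k : nat) : has_cover (band (3 * Z.of_nat k + 3)).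
Proof.
  induction k as [|k IH].
  - exact has_cover_band3.
  - replace (3 * Z.of_nat (S k) + 3) with (3 * Z.of_nat k + 3 + 3) by lia.
    apply has_cover_band_add3; [lia | exact IH].
Qed.

Lemma AD_add4_iff (n : Z) (c : cell) :
  AD (n + 3) c <-> AD (n - 1) c \/
    (band n c \/ band n (mirror_x c) \/ band n (mirror_y c) \/ band n (mirror_y (mirror_x c))).
Proof.
  destruct c as [x y]; rewrite !AD_iff; unfold band, mirror_x, mirror_y, reach; cbn [fst snd]; lia.
Qed.

Theorem corollary3 (n : Z) (hn : (2 <= n)%Z) (h3 : (3 | n)%Z) :
  has_cover (AD (n - 1)) -> has_cover (AD (n + 3)).
Proof.
  intros Hinner.
  destruct h3 as [k ->].
  assert (Hband : has_cover (band (k * 3))).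
  { replace (k * 3) with (3 * Z.of_nat (Z.to_nat (k - 1)) + 3) by lia.
    apply has_cover_band. }
  apply (has_cover_union _ _ _ (AD_add4_iff (k * 3))); [| exact Hinner |].
  - intros [x y] Hin Hout; rewrite AD_iff in Hin.
    unfold band, mirror_x, mirror_y, reach in *; cbn [fst snd] in *; lia.
  - apply has_cover_quadrant_mirrors; [|exact Hband].
    intros x y Hc; unfold band in Hc; simpl in Hc; lia.
Qed.
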